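(* Let $p$ be an odd prime, let $\Delta\in\mathbb{Z}$ with $\Delta\equiv 3\pmod 4$ be a quadratic non-residue modulo $p$, and let $\mathfrak{p}=p\mathbb{Z}[\sqrt{\Delta}]$ (so $\mathbb{Z}[\sqrt{\Delta}]/\mathfrak{p}$ is a field with $p^2$ elements, in which each $k+\sqrt{\Delta}$, $k\in\mathbb{Z}$, is invertible). Let $$C_p=\prod_{1\le s<t\le p-1}\frac{1}{(t+\sqrt{\Delta})(s+\sqrt{\Delta})}\in \mathbb{Z}[\sqrt{\Delta}]/\mathfrak{p}.$$ Then $$C_p^{\frac{p-1}{2}}\equiv\left(\frac{-2}{p}\right)\pmod{\mathfrak{p}},$$ where $\left(\frac{\cdot}{p}\right)$ is the Legendre symbol. *)

From HB Require Import structures.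
From mathcomp Require Import all_boot all_order all_algebra.
From mathcomp Require Import ring.
Set Implicit Arguments. Unset Strict Implicit. Unset Printing Implicit Defensive.
Import Order.TTheory GRing.Theory Num.Theory.
Local Open Scope ring_scope.

(* The quotient ring Z[sqrt D] / p Z[sqrt D], realized as
   F_p[sqrt D] = pairs (a, b) in F_p x F_p standing for a + b sqrt D,
   with (a + b sqrt D)(c + d sqrt D) = (ac + D bd) + (ad + bc) sqrt D.
   Indeed Z[sqrt D]/pZ[sqrt D] = (Z/pZ)[X]/(X^2 - D). *)
Definition qsq (p : nat) (D : int) : Type := ('F_p * 'F_p)%type.

Section QSq.
Variables (p : nat) (D : int).

Local Notation qsq := (qsq p D).
HB.instance Definition _ := GRing.Zmodule.on qsq.

Local Notation d := (D%:~R : 'F_p).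

Definition qmul (x y : qsq) : qsq :=
  (x.1 * y.1 + d * x.2 * y.2, x.1 * y.2 + x.2 * y.1).
Definition qone : qsq := (1, 0).

Lemma qmulA : associative qmul.
Proof. by move=> [a b] [c e] [f g]; rewrite /qmul /=; congr pair; ring. Qed.
Lemma qmulC : commutative qmul.
Proof. by move=> [a b] [c e]; rewrite /qmul /=; congr pair; ring. Qed.
Lemma qmul1 : left_id qone qmul.
Proof. by move=> [a b]; rewrite /qmul /=; congr pair; ring. Qed.
Lemma qmulDl : left_distributive qmul +%R.
Proof.
move=> [a b] [c e] [f g]; rewrite /qmul /=.
change ((a, b) + (c, e)) with ((a + c, b + e) : qsq) => /=.
change ((?x, ?y) + (?z, ?w)) with ((x + z, y + w) : qsq).
by congr pair; ring.
Qed.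
Lemma qone_neq0 : qone != 0.
Proof. by apply/eqP => -[] /eqP; rewrite oner_eq0. Qed.

HB.instance Definition _ :=
  GRing.Zmodule_isComNzRing.Build qsq qmulA qmulC qmul1 qmulDl qone_neq0.

Definition qnorm (x : qsq) : 'F_p := x.1 ^+ 2 - d * x.2 ^+ 2.
Definition qunit : pred qsq := fun x => qnorm x \is a GRing.unit.
Definition qinv (x : qsq) : qsq :=
  if qunit x then (x.1 * (qnorm x)^-1, - x.2 * (qnorm x)^-1) else x.

Lemma qnormM (x y : qsq) : qnorm (qmul x y) = qnorm x * qnorm y.
Proof. by case: x y => [a b] [c e]; rewrite /qnorm /qmul /=; ring. Qed.

Lemma qmulVr : {in qunit, left_inverse qone qinv qmul}.
Proof.
move=> [a b] Hu; rewrite /qinv.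
have -> : qunit (a, b) by exact: Hu.
move: Hu; rewrite unfold_in /qunit /qnorm /qmul /= => Hu; congr pair.
  transitivity ((a ^+ 2 - d * b ^+ 2) * (a ^+ 2 - d * b ^+ 2)^-1); first by ring.
  by rewrite mulrV.
by ring.
Qed.

Lemma qunitPl (x y : qsq) : qmul y x = qone -> qunit x.
Proof.
move=> H; have := congr1 qnorm H; rewrite qnormM.
have -> : qnorm qone = 1 by rewrite /qnorm /=; ring.
move=> H1; apply/unitrP; exists (qnorm y); split => //; by rewrite mulrC.
Qed.

Lemma qinv_out : {in [predC qunit], qinv =1 id}.
Proof. by move=> x; rewrite inE /= => Hx; rewrite /qinv ifF //; exact: negbTE Hx. Qed.

HB.instance Definition _ :=
  GRing.ComNzRing_hasMulInverse.Build qsq qmulVr qunitPl qinv_out.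

Definition sqrtD : qsq := (0, 1).
End QSq.

Definition qnonresidue (D : int) (p : nat) : bool :=
  ~~ (p%:Z %| D)%Z && ~~ [exists x : 'F_p, x ^+ 2 == D%:~R].

Definition legendre (a : int) (p : nat) : int :=
  if (p%:Z %| a)%Z then 0
  else if [exists x : 'F_p, x ^+ 2 == a%:~R] then 1 else -1.

From HB Require Import structures.
From mathcomp Require Import all_boot all_order all_algebra.
From mathcomp Require Import finfield cyclic.
From mathcomp Require Import ring zify.
Set Implicit Arguments. Unset Strict Implicit. Unset Printing Implicit Defensive.
Import Order.TTheory GRing.Theory Num.Theory.
Local Open Scope ring_scope.

(* Since D is a non-residue, Euler's criterion gives
   sqrt D ^ p = D^((p-1)/2) sqrt D = - sqrt D.  Evaluating
   X^p - X = prod_(c in F_p) (X - c) at sqrt D thus gives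
   prod_(k=1)^(p-1) (k + sqrt D) = -2.  Every factor k + sqrt D occurs p - 2
   times in the double product, so by Fermat C_p = (-2)^-(p-2) = -2, and
   Euler's criterion evaluates (-2)^((p-1)/2). *)

Section FinFieldEuler.
Variable F : finFieldType.

Lemma expf_card_pred (x : F) : x != 0 -> x ^+ #|F|.-1 = 1.
Proof.
move=> x_nz; apply: (mulIf x_nz).
by rewrite mul1r -exprSr prednK ?expf_card // ltnW ?finNzRing_gt1.
Qed.

Lemma finField_prim_root : exists g : F, #|F|.-1.-primitive_root g.
Proof.
pose rs := enum [pred x : F | x != 0].
have n_gt0 : (0 < #|F|.-1)%N by rewrite -subn1 subn_gt0 finNzRing_gt1.
have rs_roots : all #|F|.-1.-unity_root rs.
  by apply/allP => x; rewrite mem_enum unity_rootE => /expf_card_pred ->.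
have size_rs : (#|F|.-1 <= size rs)%N by rewrite -cardE cardC1.
have /hasP[g _ g_prim] := has_prim_root n_gt0 rs_roots (enum_uniq _) size_rs.
by exists g.
Qed.

Hypothesis F_odd : odd #|F|.

Lemma card_pred_half : #|F|.-1 = (#|F|.-1 %/ 2 * 2)%N.
Proof. by move: F_odd; lia. Qed.

Lemma expf_half_nonsquare (a : F) : a != 0 -> ~~ [exists x, x ^+ 2 == a] ->
  a ^+ (#|F|.-1 %/ 2) = -1.
Proof.
move=> a_nz a_nsq; have [g g_prim] := finField_prim_root.
have [i a_def] := prim_rootP g_prim (expf_card_pred a_nz).
have g_half : g ^+ (#|F|.-1 %/ 2) = -1.
  have : (g ^+ (#|F|.-1 %/ 2)) ^+ 2 == 1.
    by rewrite -exprM -card_pred_half prim_expr_order.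
  rewrite sqrf_eq1 -(prim_order_dvd g_prim) => /orP[|/eqP //].
  have := prim_order_gt0 g_prim; rewrite {3}card_pred_half.
  by move=> + /dvdn_leq; lia.
have i_odd : odd i.
  apply: contraR a_nsq => i_even; apply/existsP; exists (g ^+ i./2).
  by rewrite -exprM muln2 even_halfK // a_def.
by rewrite a_def -exprM mulnC exprM g_half -signr_odd i_odd expr1.
Qed.

Lemma euler_criterion (a : F) : a != 0 ->
  a ^+ (#|F|.-1 %/ 2) = if [exists x, x ^+ 2 == a] then 1 else -1.
Proof.
move=> a_nz; case: ifP => [/existsP[x /eqP a_def] | /negbT]; last first.
  exact: expf_half_nonsquare.
have x_nz : x != 0 by apply: contra_neq a_nz => x0; rewrite -a_def x0 expr0n.
by rewrite -a_def -exprM mulnC -card_pred_half expf_card_pred.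
Qed.

End FinFieldEuler.

Lemma euler_legendre (p : nat) (a : int) : prime p -> odd p ->
  (a%:~R : 'F_p) ^+ ((p - 1) %/ 2) = (legendre a p)%:~R.
Proof.
move=> p_pr p_odd; have F_odd : odd #|'F_p| by rewrite card_Fp.
rewrite /legendre (dvdz_pcharf (pchar_Fp p_pr)).
have h_gt0 : (0 < (p - 1) %/ 2)%N by move: (prime_gt1 p_pr) p_odd; lia.
have [-> | a_nz] := eqVneq; first by rewrite expr0n eqn0Ngt h_gt0.
have := euler_criterion F_odd a_nz; rewrite card_Fp // -subn1 => ->.
by case: ifP.
Qed.

Lemma prod_sub_finField (F : finFieldType) (R : comNzRingType)
    (f : {rmorphism F -> R}) (w : R) :
  \prod_(c : F) (w - f c) = w ^+ #|F| - w.
Proof.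
have := congr1 (fun P => (map_poly f P).[w]) (finField_genPoly F).
rewrite /= rmorph_prod horner_prod rmorphB /= map_polyXn map_polyX !hornerE.
move=> ->; apply: eq_bigr => c _.
by rewrite rmorphB /= map_polyX map_polyC hornerXsubC.
Qed.

Section PrimeField.
Variable p : nat.
Hypothesis p_pr : prime p.

Lemma big_Fp_nat (R : Type) (idx : R) (op : Monoid.law idx) (G : 'F_p -> R) :
  \big[op/idx]_(c : 'F_p) G c = \big[op/idx]_(0 <= k < p) G k%:R.
Proof.
transitivity (\big[op/idx]_(k < (Zp_trunc (pdiv p)).+2) G k%:R).
  by apply: eq_bigr => c _; rewrite natr_Zp.
by rewrite -(big_mkord xpredT (fun k => G k%:R)) Fp_cast.
Qed.

Lemma prod_nat_add_Fp (R : comNzRingType) (f : {rmorphism 'F_p -> R}) (w : R) :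
  w * \prod_(1 <= k < p) (k%:R + w) = w ^+ p - w.
Proof.
rewrite -[in RHS](card_Fp p_pr) -(prod_sub_finField f).
rewrite (reindex_inj oppr_inj) /= big_Fp_nat [RHS]big_ltn ?prime_gt0 //.
rewrite mulr0n oppr0 rmorph0 subr0; congr (_ * _).
by apply: eq_bigr => k _; rewrite rmorphN opprK rmorph_nat addrC.
Qed.

End PrimeField.

Lemma prod_nat_pairs (R : comNzRingType) (y : nat -> R) (m n : nat) :
  \prod_(m <= t < n) \prod_(m <= s < t) (y t * y s) =
  (\prod_(m <= k < n) y k) ^+ (n - m).-1.
Proof.
elim: n => [|n IHn]; first by rewrite !big_geq.
have [lt_nm | le_mn] := ltnP n m.
  by rewrite !big_geq ?expr1n.
rewrite !big_nat_recr //= IHn big_split /= prodr_const_nat exprMn.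
have [-> | ne_mn] := eqVneq m n.
  by rewrite subnn subSnn !big_geq ?expr0 ?expr1n ?mul1r.
have [k nm_def] : exists k, (n - m = k.+1)%N.
  by exists (n - m).-1; rewrite prednK // subn_gt0 ltn_neqAle ne_mn.
by rewrite subSn // nm_def /= !exprS; ring.
Qed.

Definition qconst (p : nat) (D : int) (c : 'F_p) : qsq p D := (c, 0).

Fact qconst_is_zmod_morphism (p : nat) (D : int) :
  zmod_morphism (@qconst p D).
Proof. by move=> a b; congr pair; rewrite /= subrr. Qed.

Fact qconst_is_monoid_morphism (p : nat) (D : int) :
  monoid_morphism (@qconst p D).
Proof. by split=> // a b; congr pair => /=; ring. Qed.

HB.instance Definition _ p D := GRing.isZmodMorphism.Build 'F_p (qsq p D)
  (@qconst p D) (@qconst_is_zmod_morphism p D).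
HB.instance Definition _ p D := GRing.isMonoidMorphism.Build 'F_p (qsq p D)
  (@qconst p D) (@qconst_is_monoid_morphism p D).

Section SqrtD.
Variables (p : nat) (D : int).
Hypotheses (p_pr : prime p) (p_odd : odd p) (D_nonres : qnonresidue D p).
Local Notation qconst := (@qconst p D).
Local Notation sqrtD := (sqrtD p D).

Lemma qconst_add_sqrtD_unit (c : 'F_p) : qconst c + sqrtD \is a GRing.unit.
Proof.
rewrite qualifE /= /qunit /qnorm /= unitfE subr_eq0.
case/andP: D_nonres => _; apply: contra => /eqP.
rewrite addr0 add0r expr1n mulr1 => c2_D.
by apply/existsP; exists c; rewrite c2_D.
Qed.

Lemma sqrtD_expp : sqrtD ^+ p = - sqrtD.
Proof.
have -> : sqrtD ^+ p = sqrtD ^+ ((p - 1) %/ 2 * 2).+1.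
  by congr (_ ^+ _); move: p_odd; lia.
have sqrtD_sqr : sqrtD ^+ 2 = qconst D%:~R.
  by rewrite expr2; congr pair => /=; ring.
rewrite exprSr mulnC exprM sqrtD_sqr -rmorphXn euler_legendre //.
case/andP: D_nonres => /negbTE D_ndvd /negbTE D_nsq.
by rewrite /legendre D_ndvd D_nsq rmorphN1 mulN1r.
Qed.

Lemma prod_nat_add_sqrtD : \prod_(1 <= k < p) (k%:R + sqrtD) = -2.
Proof.
have sqrtD_unit : sqrtD \is a GRing.unit.
  by have := qconst_add_sqrtD_unit 0; rewrite rmorph0 add0r.
apply: (mulrI sqrtD_unit); rewrite (prod_nat_add_Fp p_pr qconst) sqrtD_expp.
by rewrite mulrN mulr2n mulrDr mulr1 opprD.
Qed.

Lemma prod_pairs_inv_sqrtD :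
  \prod_(1 <= t < p) \prod_(1 <= s < t) ((t%:R + sqrtD) * (s%:R + sqrtD))^-1
  = -2.
Proof.
have x_unit k : k%:R + sqrtD \is a GRing.unit.
  by rewrite -(rmorph_nat qconst) qconst_add_sqrtD_unit.
have pair_unit t s : (t%:R + sqrtD) * (s%:R + sqrtD) \is a GRing.unit.
  by rewrite unitrM !x_unit.
rewrite (eq_bigr (fun t =>
    (\prod_(1 <= s < t) ((t%:R + sqrtD) * (s%:R + sqrtD)))^-1)); last first.
  by move=> t _; rewrite prodrV.
rewrite prodrV => [|t _]; last by apply/unitr_prodP.
rewrite prod_nat_pairs prod_nat_add_sqrtD; apply: mulr1_eq.
have p_gt2 : (2 < p)%N by move: (prime_gt1 p_pr) p_odd; lia.
rewrite -exprSr.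
have -> : ((p - 1).-1.+1 = #|'F_p|.-1)%N by rewrite card_Fp //; lia.
have -> : -2 = qconst (-2) by rewrite rmorphN rmorph_nat.
rewrite -rmorphXn expf_card_pred ?rmorph1 // oppr_eq0.
by rewrite -(dvdn_pcharf (pchar_Fp p_pr)) gtnNdvd.
Qed.

End SqrtD.

Theorem lemma2p3 (p : nat) (D : int) :
  prime p -> odd p -> (D %% 4)%Z = 3 -> qnonresidue D p ->
  (\prod_(1 <= t < p) \prod_(1 <= s < t)
      ((t%:R + sqrtD p D) * (s%:R + sqrtD p D))^-1 : qsq p D)
    ^+ ((p - 1) %/ 2) = (legendre (-2) p)%:~R.
Proof.
move=> p_pr p_odd _ D_nonres.
rewrite prod_pairs_inv_sqrtD //.
have -> : -2 = @qconst p D (-2)%:~R by rewrite rmorph_int.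
by rewrite -rmorphXn euler_legendre // rmorph_int.
Qed.
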